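(* Let $N\ge1$ be an integer, $d>0$, $T\ge (N+1)d$, and $0\le s_1\le\dots\le s_N$. Let $\bar x_1,\dots,\bar x_{N+1}$ be the output of the Inter-Update Balancing Algorithm defined in the context. Then the sequence $\{\bar x_i\}_{i=1}^N$ is non-increasing. Moreover, $\bar x_j>\bar x_{j+1}$ holds only if $\sum_{i=1}^j\bar x_i=s_j+jd$.
   Context: Inter-Update Balancing Algorithm. Set $s_0:=0$, $s_{N+1}:=T-d$, and $i_0:=0$. For $k=0,1,2,\dots$, while $i_k<N+1$, do the following. 1. Compute $M_k=\max_{i_k<j\le N+1}\frac{s_j-s_{i_k}}{j-i_k}$. 2. Let $i_{k+1}$ be the largest index $j\in\{i_k+1,\dots,N+1\}$ attaining this maximum. 3. Set $\bar x_i=M_k+d$ for all $i_k<i\le i_{k+1}$. The algorithm stops once $i_{k+1}=N+1$. For example, the first step computes the maximum of $\{s_1,s_2/2,\dots,s_N/N,(T-d)/(N+1)\}$. *)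

From HB Require Import structures.
From mathcomp Require Import all_boot all_order all_algebra.
Set Implicit Arguments. Unset Strict Implicit. Unset Printing Implicit Defensive.
Import Order.TTheory GRing.Theory Num.Theory.
Local Open Scope ring_scope.

Section IUB.
Variables (R : realFieldType) (N : nat) (d T : R) (s : nat -> R).

Definition sext (j : nat) : R :=
  if j == 0%N then 0 else if j == N.+1 then T - d else s j.

Definition slope (a j : nat) : R := (sext j - sext a) / (j - a)%:R.

Definition Mmax (a : nat) : R :=
  \big[Num.max/slope a a.+1]_(a.+1 <= j < N.+2) slope a j.

(* next breakpoint: largest j in {a+1,...,N+1} attaining the maximum;
   once a >= N+1 the algorithm has stopped and we stay put. *)
Definition next_bp (a : nat) : nat :=
  if (a < N.+1)%N then (\max_(a.+1 <= j < N.+2 | slope a j == Mmax a) j)%N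
  else a.

Definition bp (k : nat) : nat := iter k next_bp 0%N.

(* the breakpoint i_k with i_k < i <= i_{k+1} (for 1 <= i <= N+1) *)
Definition block_start (i : nat) : nat :=
  (\max_(k < N.+2 | (bp k < i)%N) bp k)%N.

Definition xbar (i : nat) : R := Mmax (block_start i) + d.

End IUB.

(** On the block (i_k, i_{k+1}] every xbar_i equals M_k + d, and M_k is the
    slope of the chord from i_k to i_{k+1}, so summing xbar telescopes to
    s_{i_k} + i_k d at every breakpoint.  Since i_{k+1} is the largest
    maximiser, every chord from i_k reaching beyond i_{k+1} is strictly less
    steep than M_k; such a chord is a weighted average of the chord to i_{k+1}
    (of slope M_k) and the chord from i_{k+1}, so every chord starting at
    i_{k+1} is also less steep than M_k, i.e. M_{k+1} < M_k.  Hence xbar is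
    constant on blocks and drops exactly at breakpoints. *)
From Pilot Require Import Defs.
From HB Require Import structures.
From mathcomp Require Import all_boot all_order all_algebra.
From mathcomp Require Import lra zify.
Import Order.TTheory GRing.Theory Num.Theory.
Local Open Scope ring_scope.
Set Implicit Arguments. Unset Strict Implicit.

Lemma bigmax_mem disp (T : orderType disp) (I : eqType) (r : seq I) (x : T) F :
  \big[Order.max/x]_(i <- r) F i \in x :: map F r.
Proof.
rewrite big_seq; elim/big_ind: _ => [|y z Hy Hz|i ri]; first exact: mem_head.
- by rewrite maxElt; case: ifP.
- by rewrite in_cons map_f ?orbT.
Qed.

Lemma bigmaxn_id_mem (r : seq nat) (P : pred nat) :
  has P r -> (\max_(j <- r | P j) j \in filter P r)%N.
Proof.
case/hasP=> j0 j0r Pj0; rewrite -big_filter.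
have j0P : j0 \in filter P r by rewrite mem_filter Pj0.
have : \max_(j <- filter P r) j \in 0%N :: filter P r.
  by have := bigmax_mem (filter P r) 0%N (fun j => j); rewrite map_id.
case/predU1P=> [max0|//]; rewrite max0.
have : (j0 <= \max_(j <- filter P r) j)%N by exact: leq_bigmax_seq.
by rewrite max0 leqn0 => /eqP <-.
Qed.

Lemma ex_crossing (f : nat -> nat) i n :
  (f 0 < i <= f n)%N -> exists k, (f k < i <= f k.+1)%N.
Proof.
elim: n => [|n IH] /andP[f0i ifn]; first by rewrite leqNgt f0i in ifn.
have [ifn'|fni] := leqP i (f n); first by apply: IH; rewrite f0i.
by exists n; rewrite fni.
Qed.

Section InterUpdateBalancing.
Variables (R : realFieldType) (N : nat) (d T : R) (s : nat -> R).

Local Notation sext := (sext N d T s).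
Local Notation slope := (slope N d T s).
Local Notation Mmax := (Mmax N d T s).
Local Notation next_bp := (next_bp N d T s).
Local Notation bp := (bp N d T s).
Local Notation block_start := (block_start N d T s).
Local Notation xbar := (xbar N d T s).

Lemma sext_inner j : (1 <= j <= N)%N -> sext j = s j.
Proof. by move=> Hj; rewrite /Defs.sext ifN_eq ?ifN_eq //; lia. Qed.

Lemma slope_ltE a j m : (a < j)%N ->
  (slope a j < m) = (sext j - sext a < m * (j - a)%:R).
Proof. by move=> aj; rewrite /Defs.slope ltr_pdivrMr // ltr0n subn_gt0. Qed.

Lemma slope_eqE a j m : (a < j)%N ->
  (slope a j = m) <-> (sext j - sext a = m * (j - a)%:R).
Proof.
move=> aj; have ja0 : (j - a)%:R != 0 :> R.
  by rewrite pnatr_eq0 subn_eq0 -ltnNge.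
by split=> [<-|E]; rewrite /Defs.slope ?divfK ?E ?mulfK.
Qed.

Lemma slope_lt_from_mid a b j m : (a < b < j)%N ->
  slope a b = m -> slope a j < m -> slope b j < m.
Proof.
move=> /andP[ab bj] /(slope_eqE _ ab); rewrite !slope_ltE ?(ltn_trans ab) //.
by rewrite !natrB ?(ltnW ab) ?(ltnW bj) ?(ltnW (ltn_trans ab bj)) //; lra.
Qed.

Lemma slope_le_Mmax a j : (a < j <= N.+1)%N -> slope a j <= Mmax a.
Proof. by move=> Hj; apply: le_bigmax_seq; rewrite // mem_index_iota. Qed.

Lemma Mmax_attained a : (a < N.+1)%N ->
  exists2 j, (a < j <= N.+1)%N & slope a j = Mmax a.
Proof.
move=> aN; have := bigmax_mem (index_iota a.+1 N.+2) (slope a a.+1) (slope a).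
rewrite /Defs.Mmax in_cons => /predU1P[->|/mapP[j]].
  by exists a.+1; rewrite ?leqnn.
by rewrite mem_index_iota => Hj ->; exists j.
Qed.

Lemma next_bp_max a : (a < N.+1)%N ->
  (a < next_bp a <= N.+1)%N /\ slope a (next_bp a) = Mmax a.
Proof.
move=> aN; have [j Hj Mj] := Mmax_attained aN.
have : has (fun j => slope a j == Mmax a) (index_iota a.+1 N.+2).
  by apply/hasP; exists j; rewrite ?mem_index_iota ?Mj.
move/bigmaxn_id_mem; rewrite /Defs.next_bp aN mem_filter mem_index_iota.
by case/andP=> /eqP.
Qed.

Lemma slope_lt_Mmax_after a j : (a < N.+1)%N -> (next_bp a < j <= N.+1)%N ->
  slope a j < Mmax a.
Proof.
move=> aN Hj; have [Hb _] := next_bp_max aN.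
rewrite lt_neqAle slope_le_Mmax ?andbT; last by lia.
apply/eqP=> Mj; suff : (j <= next_bp a)%N by lia.
rewrite /Defs.next_bp aN; apply: leq_bigmax_seq; last by rewrite Mj.
by rewrite mem_index_iota; lia.
Qed.

Lemma bpS k : bp k.+1 = next_bp (bp k).
Proof. exact: iterS. Qed.

Lemma bp_le k : (bp k <= N.+1)%N.
Proof.
elim: k => // k IH; rewrite bpS.
have [/next_bp_max[/andP[]] //|Nk] := ltnP (bp k) N.+1.
by rewrite /Defs.next_bp ltnNge Nk.
Qed.

Lemma bpS_gt k : (bp k < N.+1)%N -> (bp k < bp k.+1)%N.
Proof. by rewrite bpS => /next_bp_max[/andP[]]. Qed.

Lemma bpS_stop k : (N.+1 <= bp k)%N -> bp k.+1 = bp k.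
Proof. by move=> Nk; rewrite bpS /Defs.next_bp ltnNge Nk. Qed.

Lemma bp_leS k : (bp k <= bp k.+1)%N.
Proof. by have [/bpS_gt/ltnW //|/bpS_stop->] := ltnP (bp k) N.+1. Qed.

Lemma bp_homo : {homo bp : k l / (k <= l)%N}.
Proof. exact: homo_leq leqnn leq_trans bp_leS. Qed.

Lemma bp_ge_minn k : (minn k N.+1 <= bp k)%N.
Proof.
elim: k => // k IH; have [/bpS_gt|Nk] := ltnP (bp k) N.+1; first by lia.
by rewrite bpS_stop //; lia.
Qed.

Lemma block_startE k i : (bp k < i <= bp k.+1)%N -> block_start i = bp k.
Proof.
move=> Hi; apply/eqP; rewrite eqn_leq; apply/andP; split.
  apply/bigmax_leqP=> l bpl; have [//|kl] := leqP l k; first exact: bp_homo.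
  by have := bp_homo kl; lia.
have kN : (k < N.+2)%N.
  by have := bp_ge_minn k; have := bp_le k.+1; lia.
by apply: (@leq_bigmax_cond _ _ _ (Ordinal kN)) => /=; lia.
Qed.

Lemma xbar_block k i : (bp k < i <= bp k.+1)%N -> xbar i = Mmax (bp k) + d.
Proof. by move=> Hi; rewrite /Defs.xbar (block_startE Hi). Qed.

Lemma Mmax_bpS_lt k : (bp k.+1 < N.+1)%N -> Mmax (bp k.+1) < Mmax (bp k).
Proof.
move=> bN; have aN := leq_ltn_trans (bp_leS k) bN.
have [Ha Mb] := next_bp_max aN; rewrite -bpS in Ha Mb.
have [j Hj <-] := Mmax_attained bN.
apply: slope_lt_from_mid Mb _; first by lia.
by apply: slope_lt_Mmax_after; rewrite -?bpS.
Qed.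

Lemma sum_xbar_bp k :
  \sum_(1 <= i < (bp k).+1) xbar i = sext (bp k) + (bp k)%:R * d.
Proof.
elim: k => [|k IH]; first by rewrite big_geq // /Defs.sext /= mul0r addr0.
have [aN|/bpS_stop->//] := ltnP (bp k) N.+1.
have [_ Mb] := next_bp_max aN; rewrite -bpS in Mb.
have ab := bpS_gt aN; move/(slope_eqE _ ab): Mb.
rewrite (@big_cat_nat _ _ _ (bp k).+1) //; last by rewrite ltnS ltnW.
rewrite IH (eq_big_nat _ _ (F2 := fun=> Mmax (bp k) + d)); last first.
  by move=> i Hi; apply: xbar_block; lia.
rewrite sumr_const_nat subSS -[(Mmax _ + d) *+ _]mulr_natr /=.
by rewrite !natrB ?(ltnW ab) //; lra.
Qed.

Lemma xbar_succ_cases i : (1 <= i <= N)%N ->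
  xbar i.+1 = xbar i \/ exists2 k, i = bp k & xbar i.+1 < xbar i.
Proof.
move=> Hi; have [|k Hk] := @ex_crossing bp i N.+1.
  by have := bp_ge_minn N.+1; rewrite /Defs.bp /=; lia.
have [ib|bi] := ltnP i (bp k.+1).
  by left; rewrite !(xbar_block (k := k)) //; lia.
have iN : (bp k.+1 < N.+1)%N by lia.
have iS : (bp k.+1 < i.+1 <= bp k.+2)%N by have := bpS_gt iN; lia.
right; exists k.+1; first by lia.
by rewrite (xbar_block iS) (xbar_block Hk) ltrD2r Mmax_bpS_lt.
Qed.

End InterUpdateBalancing.

Theorem lemma4 (R : realFieldType) (N : nat) (d T : R) (s : nat -> R) :
  (1 <= N)%N -> 0 < d -> N.+1%:R * d <= T ->
  0 <= s 1%N ->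
  (forall i : nat, (1 <= i)%N -> (i < N)%N -> s i <= s i.+1) ->
  (forall i : nat, (1 <= i)%N -> (i < N)%N ->
     xbar N d T s i.+1 <= xbar N d T s i) /\
  (forall j : nat, (1 <= j)%N -> (j <= N)%N ->
     xbar N d T s j.+1 < xbar N d T s j ->
     \sum_(1 <= i < j.+1) xbar N d T s i = s j + j%:R * d).
Proof.
move=> _ _ _ _ _; split=> [i i1 iN | j j1 jN].
- have iN' : (1 <= i <= N)%N by rewrite i1 ltnW.
  by have [->|[_ _ /ltW]] := xbar_succ_cases d T s iN'.
- have jN' : (1 <= j <= N)%N by rewrite j1.
  have [->|[k jk _]] := xbar_succ_cases d T s jN'; first by rewrite ltxx.
  by rewrite jk sum_xbar_bp -jk sext_inner.
Qed.
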